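(* Let $a\ge b\ge2$ and $k$ be integers with $2a+3\le k\le2a+2b-1$. Then for every $(i,j)\in\overline{Q}_1$: - $w_1,w_3,w_5\in\mathcal{R}^k_{(a,b),(i,j)}$; - if $b\ge\lceil(a+3)/2\rceil$ and $k=a+2b$, then $w_4\in\mathcal{R}^k_{(a,b),(i,j)}$; - if $b\ge\lceil a/2\rceil+2$ and $2a+3\le k\le a+2b-1$, then $w_6\in\mathcal{R}^k_{(a,b),(i,j)}$.
   Context: $\widehat{\mathfrak{su}}(3)_k$ fusion. Let $P_+^k=\{(\lambda_1,\lambda_2)\in\mathbb{Z}_{\ge0}^2:\lambda_1+\lambda_2\le k\}$. For $\lambda,\mu,\nu\in P_+^k$ set - $\mathcal{A}=\tfrac13[2(\lambda_1+\mu_1+\nu_2)+\lambda_2+\mu_2+\nu_1]$, - $\mathcal{B}=\tfrac13[\lambda_1+\mu_1+\nu_2+2(\lambda_2+\mu_2+\nu_1)]$, - $k_0^{\max}=\min(\mathcal{A},\mathcal{B})$, - $k_0^{\min}=\max(\lambda_1+\lambda_2,\mu_1+\mu_2,\nu_1+\nu_2,\mathcal{A}-\lambda_1,\mathcal{A}-\mu_1,\mathcal{A}-\nu_2,\mathcal{B}-\lambda_2,\mathcal{B}-\mu_2,\mathcal{B}-\nu_1)$. The fusion multiplicity is $N^{(k)\nu}_{\lambda,\mu}=\min(k_0^{\max},k)-k_0^{\min}+1$ if $\mathcal{A},\mathcal{B}$ are nonnegative integers, $k_0^{\max}\ge k_0^{\min}$ and $k\ge k_0^{\min}$; otherwise it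 is $0$. The set $\mathcal{R}^k_{\lambda,\mu}$ is $\{\nu\in P_+^k:N^{(k)\nu}_{\lambda,\mu}\ne0\}$. The candidate weights are $w_1=(a-1,b+2)$, $w_2=(a+2,b-1)$, $w_3=(a+1,b-2)$, $w_4=(a-2,b+1)$, $w_5=(a+1,b+1)$, $w_6=(a-1,b-1)$. The set $\overline{Q}_1$ is defined by $\overline{Q}_1=\{(3p-k,2k-3p):p\in\mathbb{Z},\ \lceil(k+1)/2\rceil\le p\le\min(a+b,k-a-1,\lfloor2k/3\rfloor,\lfloor(b+k)/2\rfloor)\}$. *)

From mathcomp Require Import all_boot all_order all_algebra.
Set Implicit Arguments. Unset Strict Implicit. Unset Printing Implicit Defensive.
Import Order.TTheory GRing.Theory Num.Theory.
Local Open Scope ring_scope.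

(* Weights of su(3) are pairs of integers (lambda_1, lambda_2). *)
Definition weight := (int * int)%type.

(* floor(x/d) and ceil(x/d) for d > 0 (divz is floor division for d > 0). *)
Definition floorq (x d : int) : int := (x %/ d)%Z.
Definition ceilq (x d : int) : int := - ((- x) %/ d)%Z.

Definition in_Pplus (k : int) (l : weight) : bool :=
  (0 <= l.1) && (0 <= l.2) && (l.1 + l.2 <= k).

Definition numA (l m n : weight) : int :=
  2 * (l.1 + m.1 + n.2) + l.2 + m.2 + n.1.
Definition numB (l m n : weight) : int :=
  l.1 + m.1 + n.2 + 2 * (l.2 + m.2 + n.1).

Definition AB_nat (l m n : weight) : bool :=
  (3 %| numA l m n)%Z && (3 %| numB l m n)%Z &&
  (0 <= numA l m n) && (0 <= numB l m n).

Definition cA (l m n : weight) : int := (numA l m n %/ 3)%Z.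
Definition cB (l m n : weight) : int := (numB l m n %/ 3)%Z.

Definition k0max (l m n : weight) : int := Num.min (cA l m n) (cB l m n).
Definition k0min (l m n : weight) : int :=
  let A := cA l m n in let B := cB l m n in
  Num.max (l.1 + l.2) (Num.max (m.1 + m.2) (Num.max (n.1 + n.2)
  (Num.max (A - l.1) (Num.max (A - m.1) (Num.max (A - n.2)
  (Num.max (B - l.2) (Num.max (B - m.2) (B - n.1)))))))).

Definition fusionN (k : int) (l m n : weight) : int :=
  if AB_nat l m n && (k0min l m n <= k0max l m n) && (k0min l m n <= k)
  then Num.min (k0max l m n) k - k0min l m n + 1
  else 0.

Definition inR (k : int) (l m n : weight) : Prop :=
  in_Pplus k n /\ fusionN k l m n != 0.

Definition w1 (a b : int) : weight := (a - 1, b + 2).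
Definition w2 (a b : int) : weight := (a + 2, b - 1).
Definition w3 (a b : int) : weight := (a + 1, b - 2).
Definition w4 (a b : int) : weight := (a - 2, b + 1).
Definition w5 (a b : int) : weight := (a + 1, b + 1).
Definition w6 (a b : int) : weight := (a - 1, b - 1).

Definition inQ1bar (a b k : int) (ij : weight) : Prop :=
  exists p : int,
    ceilq (k + 1) 2 <= p /\
    p <= Num.min (a + b) (Num.min (k - a - 1)
           (Num.min (floorq (2 * k) 3) (floorq (b + k) 2))) /\
    ij = (3 * p - k, 2 * k - 3 * p).

From mathcomp Require Import all_boot all_order all_algebra zify.
Import Order.TTheory GRing.Theory Num.Theory.
Local Open Scope ring_scope.

(* For
   each candidate weight nu, the numbers 3A and 3B become explicit multiples of 3
   (e.g. A = a + b + p + 1 and B = a + b + k - p for nu = w1), so N^(k) is nonzero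
   as soon as the nine lower bounds defining k0min lie below min(A, B, k).  Each of
   these is a linear inequality in a, b, k, p that follows from the constraints on
   p and the hypotheses on a, b, k. *)

Lemma fusionN_neq0 k l m n :
  (fusionN k l m n != 0) =
  [&& AB_nat l m n, k0min l m n <= k0max l m n & k0min l m n <= k].
Proof. by rewrite /fusionN andbA; case: ifP => // /andP[/andP[_ ? ?]]; lia. Qed.

Lemma inR_of_quotients k l m n A B :
  numA l m n = 3 * A -> numB l m n = 3 * B -> 0 <= A -> 0 <= B ->
  in_Pplus k n -> k0min l m n <= Num.min (Num.min A B) k -> inR k l m n.
Proof.
move=> eA eB A_ge0 B_ge0 n_in k0min_le; split=> //.
have cAE : cA l m n = A by rewrite /cA eA; lia.
have cBE : cB l m n = B by rewrite /cB eB; lia.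
rewrite fusionN_neq0 /AB_nat /k0max cAE cBE eA eB.
by move: k0min_le; rewrite !le_min; lia.
Qed.

Lemma inQ1bar_bounds a b k ij :
  inQ1bar a b k ij ->
  exists2 p : int,
    [/\ k + 1 <= 2 * p, 3 * p <= 2 * k, 2 * p <= b + k, p <= a + b
      & p <= k - a - 1]
    & ij = (3 * p - k, 2 * k - 3 * p).
Proof.
case=> p [+ [+ ->]]; rewrite !le_min /ceilq /floorq => p_ge /and4P[? ? ? ?].
by exists p => //; split; lia.
Qed.

Ltac fusion_lia := rewrite /k0min /cA /cB /numA /numB /in_Pplus /=; lia.

Theorem mainTheorem8 (a b k : int) :
  2 <= b -> b <= a -> 2 * a + 3 <= k -> k <= 2 * a + 2 * b - 1 ->
  forall ij : weight, inQ1bar a b k ij ->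
    (inR k (a, b) ij (w1 a b) /\ inR k (a, b) ij (w3 a b) /\
     inR k (a, b) ij (w5 a b)) /\
    (ceilq (a + 3) 2 <= b -> k = a + 2 * b -> inR k (a, b) ij (w4 a b)) /\
    (ceilq a 2 + 2 <= b -> 2 * a + 3 <= k -> k <= a + 2 * b - 1 ->
       inR k (a, b) ij (w6 a b)).
Proof.
move=> b_ge2 b_le_a k_ge k_le ij /inQ1bar_bounds[p [p_ge p_le2k p_lebk p_leab p_leka] ->].
split; [split; [|split] | split].
- by apply: (@inR_of_quotients _ _ _ _ (a + b + p + 1) (a + b + k - p)); fusion_lia.
- by apply: (@inR_of_quotients _ _ _ _ (a + b + p - 1) (a + b + k - p)); fusion_lia.
- by apply: (@inR_of_quotients _ _ _ _ (a + b + p + 1) (a + b + k - p + 1));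
    fusion_lia.
- rewrite /ceilq => b_ge k_eq.
  by apply: (@inR_of_quotients _ _ _ _ (a + b + p) (a + b + k - p - 1)); fusion_lia.
- rewrite /ceilq => b_ge _ k_le'.
  by apply: (@inR_of_quotients _ _ _ _ (a + b + p - 1) (a + b + k - p - 1));
    fusion_lia.
Qed.
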